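(* Let $\alpha>0$, $\varepsilon>0$, and let $S_1,C$ be produced by Phase A and $S_2$ by Phase B (before removing $S_2\cap D$). Let $O\in\mathcal M$ be an optimal feasible solution over the data $(V\setminus C)\cup(C\setminus D)$, i.e. $O\in\arg\max\{f(S): S\subseteq (V\setminus C)\cup(C\setminus D),\ S\in\mathcal M\}$. Then \[ f(O)\le \beta\, w(S_2),\qquad \beta=(p(\alpha+1)-1)(\alpha+1)/\alpha+1+1/\alpha. \]
   Context: Setting. $V$ is a finite ground set of $n=|V|$ items arriving one at a time in a fixed stream order. $f:2^V\to\mathbb R_{\ge 0}$ is non-decreasing and submodular with $f(\emptyset)=0$; write $f(v\mid X)=f(X\cup\{v\})-f(X)$. $\mathcal M=\mathcal M_1\cap\dots\cap\mathcal M_p$ is the intersection of $p$ matroids $\mathcal M_1,\dots,\mathcal M_p$ on $V$ (a ''$p$-matroid''); a set is feasible if it lies in $\mathcal M$; the rank is $r=\max_{S\in\mathcal M}|S|$. $d\ge 0$ is an integer and $D\subseteq V$ is a deletion set with $|D|\le d$, fixed in advance and independent of the algorithm's random bits (static adversary). Weights. Items receive a weight $w(v)\ge 0$ when processed, as specified below; for a set $S$, $w(S)=\sum_{u\in S}w(u)$ (with $w(\emptyset)=0$). Exchange$(v,I)$: for each $j\in[p]$ with $I\cup\{v\}\notin\mathcal M_j$, let $u_j\in\arg\min\{w(u): u\in I,\ (I\cup\{v\})\setminus\{u\}\in\mathcal M_j\}$; return the set $\{u_j\}$ of these items (empty if $I\cup\{v\}\in\mathcal M$). Phase A (streaming, parameters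 $\varepsilon,\alpha>0$): initialize $I=\emptyset$, $C=\emptyset$. For each arriving item $v'$ of $V$ in stream order: (1) $C\gets C\cup\{v'\}$; (2) $C\gets\{v\in C: f(v\mid I)\ge (1+\alpha)\,w(\mathrm{Exchange}(v,I))\}$; (3) if $|C|\ge d/\varepsilon$, sample one item $v\in C$ at random with probability proportional to $1/f(v\mid I)$, set $w(v)=f(v\mid I)$, and set $I\gets (I\cup\{v\})\setminus \mathrm{Exchange}(v,I)$. At the end output $S_1:=I$ and the buffer $C$. The coreset is $R=S_1\cup C$. Phase B (after deletions, parameter $\alpha$): start with $I=S_1$. For each $v\in C\setminus D$: set $w(v)=f(v\mid I)$, $S=\mathrm{Exchange}(v,I)$, and if $w(v)\ge(1+\alpha)w(S)$ set $I\gets(I\cup\{v\})\setminus S$. Let $S_2$ be the final $I$; output $\mathrm{ALG}=S_2\setminus D$. *)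

From HB Require Import structures.
From mathcomp Require Import all_boot all_order all_algebra.
Set Implicit Arguments. Unset Strict Implicit. Unset Printing Implicit Defensive.
Import Order.TTheory GRing.Theory Num.Theory.
Local Open Scope ring_scope.

Section Defs.
Variables (R : realFieldType) (V : finType).

Definition mg (f : {set V} -> R) (v : V) (X : {set V}) : R := f (v |: X) - f X.

Definition monotone (f : {set V} -> R) : Prop :=
  forall A B : {set V}, A \subset B -> f A <= f B.

Definition submodular (f : {set V} -> R) : Prop :=
  forall (A B : {set V}) (x : V), A \subset B -> x \notin B -> mg f x B <= mg f x A.

Definition is_matroid (M : pred {set V}) : Prop :=
  [/\ M set0,
      (forall A B : {set V}, A \subset B -> M B -> M A) &
      (forall A B : {set V}, M A -> M B -> (#|A| < #|B|)%N ->
          exists2 x, x \in B :\: A & M (x |: A))].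

Definition feasible (p : nat) (Ms : 'I_p -> pred {set V}) (S : {set V}) : Prop :=
  forall j, Ms j S.

Definition wsum (w : V -> R) (S : {set V}) : R := \sum_(u in S) w u.

Definition upd (w : V -> R) (v : V) (a : R) : V -> R :=
  fun u => if u == v then a else w u.

(* Ex is a valid implementation of Exchange(v, X) (w.r.t. current weights w),
   for every feasible X, with an arbitrary tie-breaking rule for the argmin *)
Definition exch_spec (p : nat) (Ms : 'I_p -> pred {set V})
    (Ex : {set V} -> V -> (V -> R) -> {set V}) : Prop :=
  forall (X : {set V}) (v : V) (w : V -> R), feasible Ms X ->
  exists u : 'I_p -> V,
    (forall j, ~~ Ms j (v |: X) ->
       [/\ u j \in X, Ms j ((v |: X) :\ u j) &
           forall u', u' \in X -> Ms j ((v |: X) :\ u') -> w (u j) <= w u'])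
    /\ Ex X v w = u @: [set j | ~~ Ms j (v |: X)].

Definition stepA (f : {set V} -> R) (Ex : {set V} -> V -> (V -> R) -> {set V})
    (d : nat) (eps alpha : R) (x : V)
    (st st' : {set V} * {set V} * (V -> R)) : Prop :=
  let: (X, C, w) := st in
  let C2 := [set v in x |: C | (1 + alpha) * wsum w (Ex X v w) <= mg f v X] in
  if #|C2|%:R < d%:R / eps then st' = (X, C2, w)
  else exists2 v, v \in C2 &
     st' = ((v |: X) :\: Ex X v w, C2 :\ v, upd w v (mg f v X)).

Fixpoint runA f Ex d eps alpha (s : seq V)
    (st st' : {set V} * {set V} * (V -> R)) : Prop :=
  match s with
  | [::] => st' = st
  | x :: s' => exists2 mid, stepA f Ex d eps alpha x st mid &
                            runA f Ex d eps alpha s' mid st'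
  end.

Definition stepB (f : {set V} -> R) (Ex : {set V} -> V -> (V -> R) -> {set V})
    (alpha : R) (v : V) (st st' : {set V} * (V -> R)) : Prop :=
  let: (X, w) := st in
  let w' := upd w v (mg f v X) in
  let S := Ex X v w' in
  if (1 + alpha) * wsum w' S <= w' v then st' = ((v |: X) :\: S, w')
  else st' = (X, w').

Fixpoint runB f Ex alpha (s : seq V) (st st' : {set V} * (V -> R)) : Prop :=
  match s with
  | [::] => st' = st
  | x :: s' => exists2 mid, stepB f Ex alpha x st mid & runB f Ex alpha s' mid st'
  end.

End Defs.

From HB Require Import structures.
From mathcomp Require Import all_boot all_order all_algebra.
From mathcomp Require Import ring lra zify.
Import Order.TTheory GRing.Theory Num.Theory.
Set Implicit Arguments. Unset Strict Implicit. Unset Printing Implicit Defensive.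
Local Open Scope ring_scope.

(* Both phases maintain a charging certificate for the current solution [X] with
   weights [w].  Each item is weighted by its marginal gain when inserted, so the set
   [A] of all inserted items has [f A <= w(A)]; each swap gains a factor [1 + alpha],
   so the removed items weigh at most [w(X) / alpha].  A rejected item [o] satisfies
   [f(o | A) <= (1 + alpha) * sum_j cov_j(o)], where [cov_j(o)] is the weight of the
   lightest item blocking [o] in [M_j].  Every item of weight (or charge) at least
   [t] stays spanned in [M_j] by the items of weight at least [t] in [X] and in a set
   [G_j] of removed items, with [sum_j w(G_j) <= (p - 1) * w(A :\: X)].  For a
   feasible [O], comparing superlevel sets through matroid ranks bounds
   [sum_(o in O :\: A) cov_j(o)] by [w(X) + w(G_j)], and summing over [j] gives
   [f O <= beta * w(X)]. *)

Section SumInequalities.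
Variable R : realFieldType.

Lemma ler_sum_subset (T : finType) (A B : {set T}) (a : T -> R) :
  A \subset B -> (forall x, x \in B -> 0 <= a x) ->
  \sum_(x in A) a x <= \sum_(x in B) a x.
Proof.
move=> sAB a_ge0; rewrite [leRHS](big_setID A) /= (setIidPr sAB) lerDl.
by apply: sumr_ge0 => x; rewrite inE => /andP[_ /a_ge0].
Qed.

Lemma ler_sum_setU (T : finType) (A B : {set T}) (a : T -> R) :
  (forall x, x \in B -> 0 <= a x) ->
  \sum_(x in A :|: B) a x <= \sum_(x in A) a x + \sum_(x in B) a x.
Proof.
move=> a_ge0; rewrite (big_setID A) /= setUK setDUl setDv set0U lerD2l.
exact/ler_sum_subset/a_ge0/subsetDl.
Qed.

Lemma ler_sum_imset (I T : finType) (u : I -> T) (P : {set I}) (a : T -> R) :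
  (forall i, i \in P -> 0 <= a (u i)) ->
  \sum_(x in u @: P) a x <= \sum_(i in P) a (u i).
Proof.
move=> a_ge0; rewrite (partition_big_imset u) /=.
apply: ler_sum => _ /imsetP[i iP ->].
rewrite (bigD1 i) /=; last by rewrite iP eqxx.
rewrite lerDl; apply: sumr_ge0 => k /andP[/andP[kP _] _]; exact: a_ge0.
Qed.

Lemma ler_sum_superlevel (I J : finType) (P : {set I}) (Q : {set J})
    (a : I -> R) (b : J -> R) :
  (forall x, x \in P -> 0 <= a x) -> (forall y, y \in Q -> 0 <= b y) ->
  (forall t, 0 < t ->
     (#|[set x in P | (t <= a x)%R]| <= #|[set y in Q | (t <= b y)%R]|)%N) ->
  \sum_(x in P) a x <= \sum_(y in Q) b y.
Proof.
move: {2}#|P| (erefl #|P|) => n; elim: n P Q => [|n IH] P Q cardP a_ge0 b_ge0 levelPQ.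
  by move/eqP: cardP; rewrite cards_eq0 => /eqP ->; rewrite big_set0 sumr_ge0.
have [m mP a_max] : exists2 m, m \in P & forall x, x \in P -> a x <= a m.
  have [x0 x0P] : exists x0, x0 \in P by apply/set0Pn; rewrite -card_gt0 cardP.
  by case: (arg_maxP a x0P) => m; exists m.
have [am_le0|am_gt0] := lerP (a m) 0.
  apply: (@le_trans _ _ 0); last by apply: sumr_ge0 => y /b_ge0.
  by apply: sumr_le0 => x xP; exact: le_trans (a_max x xP) am_le0.
have [j jQ bj_ge] : exists2 j, j \in Q & a m <= b j.
  have : (0 < #|[set y in Q | (a m <= b y)%R]|)%N.
    by apply: leq_trans (levelPQ _ am_gt0); apply/card_gt0P; exists m; rewrite inE mP lexx.
  by case/card_gt0P => j; rewrite inE => /andP[]; exists j.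
rewrite (big_setD1 _ mP) (big_setD1 _ jQ) /= lerD //.
apply: IH => [|x|y|t t_gt0].
- by move: cardP; rewrite (cardsD1 m) mP => -[].
- by rewrite inE => /andP[_ /a_ge0].
- by rewrite inE => /andP[_ /b_ge0].
have levelD1 (K : finType) (Z : {set K}) (c : K -> R) k :
    [set z in Z :\ k | t <= c z] = [set z in Z | t <= c z] :\ k.
  by apply/setP => z; rewrite !inE andbA.
rewrite !levelD1; have [t_le|t_gt] := lerP t (a m).
  have := levelPQ t t_gt0; rewrite (cardsD1 m) (cardsD1 j) !inE mP jQ t_le.
  by rewrite (le_trans t_le bj_ge).
suff -> : [set x in P | t <= a x] :\ m = set0 by rewrite cards0.
apply/setP => x; rewrite !inE; apply/negbTE; rewrite !negb_and -ltNge.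
by case: (boolP (x \in P)) => xP; rewrite ?orbT // (le_lt_trans (a_max x xP) t_gt) !orbT.
Qed.

End SumInequalities.

Section MatroidRank.
Variables (V : finType) (M : pred {set V}).

Definition rank (T : {set V}) : nat := \max_(Y : {set V} | (Y \subset T) && M Y) #|Y|.

Definition spanned (x : V) (T : {set V}) : bool := (rank (x |: T) <= rank T)%N.

Lemma card_le_rank (T Y : {set V}) : Y \subset T -> M Y -> (#|Y| <= rank T)%N.
Proof. by move=> sYT MY; apply: (@leq_bigmax_cond _ _ (fun Y : {set V} => #|Y|)); rewrite sYT. Qed.

Lemma rank_le_card (T : {set V}) : (rank T <= #|T|)%N.
Proof. by apply/bigmax_leqP => Y /andP[sYT _]; exact: subset_leq_card. Qed.

Lemma rankS (T T' : {set V}) : T \subset T' -> (rank T <= rank T')%N.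
Proof.
by move=> sTT'; apply/bigmax_leqP => Y /andP[sYT MY]; apply/card_le_rank/MY/subset_trans/sTT'.
Qed.

Lemma spanned_mem (x : V) (T : {set V}) : x \in T -> spanned x T.
Proof. by move=> xT; rewrite /spanned (setUidPr _) ?sub1set. Qed.

Hypothesis matM : is_matroid M.

Lemma indepS (A B : {set V}) : A \subset B -> M B -> M A.
Proof. by case: matM => _ + _; apply. Qed.

Lemma rank_witness (T : {set V}) : exists2 Y : {set V}, (Y \subset T) && M Y & #|Y| = rank T.
Proof.
have [|Y] := @eq_bigmax_cond _ [pred Y : {set V} | (Y \subset T) && M Y] (fun Y => #|Y|).
  by apply/card_gt0P; exists set0; rewrite inE sub0set; case: matM.
by exists Y.
Qed.

Lemma indep_augment (Y B : {set V}) : M Y -> M B ->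
  exists Y' : {set V}, [/\ Y \subset Y', Y' \subset Y :|: B, M Y' & (#|B| <= #|Y'|)%N].
Proof.
move: {2}(#|B| - #|Y|)%N (erefl (#|B| - #|Y|)%N) => k.
elim: k Y => [|k IH] Y gap MY MB; first by exists Y; rewrite subsetUl; split => //; lia.
have [x /setDP[xB xY] Mx] : exists2 x, x \in B :\: Y & M (x |: Y).
  by case: matM => _ _; apply => //; lia.
have [|Y' [sxY' sY' MY' cardY']] := IH (x |: Y) _ Mx MB; first by rewrite cardsU1 xY; lia.
exists Y'; split => //; first exact: subset_trans (subsetUr _ _) sxY'.
by apply: subset_trans sY' _; rewrite !subUset subsetUr subsetUl sub1set !inE xB orbT.
Qed.

Lemma rank_submod (A B : {set V}) :
  (rank (A :|: B) + rank (A :&: B) <= rank A + rank B)%N.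
Proof.
have [I /andP[sIAB MI] <-] := rank_witness (A :&: B).
have [K /andP[sKAB MK] <-] := rank_witness (A :|: B).
have [J [sIJ sJ MJ cardJ]] := indep_augment MI MK.
have sJAB : J \subset A :|: B.
  apply: subset_trans sJ _; rewrite subUset sKAB andbT (subset_trans sIAB) //.
  exact: subset_trans (subsetIl _ _) (subsetUl _ _).
have rk_part (T : {set V}) : (#|J :&: T| <= rank T)%N.
  exact: card_le_rank (subsetIr _ _) (indepS (subsetIl _ _) MJ).
have rkA := rk_part A; have rkB := rk_part B.
have cardI : (#|I| <= #|(J :&: A) :&: (J :&: B)|)%N.
  by rewrite -setIIr subset_leq_card // subsetI sIJ.
have := cardsUI (J :&: A) (J :&: B); rewrite -setIUr (setIidPl sJAB); lia.
Qed.

Lemma spannedS (x : V) (T T' : {set V}) : T \subset T' -> spanned x T -> spanned x T'.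
Proof.
rewrite /spanned => sTT' spx; have := rank_submod (x |: T) T'.
have -> : (x |: T) :|: T' = x |: T' by rewrite -setUA (setUidPr sTT').
have : (rank T <= rank ((x |: T) :&: T'))%N by rewrite rankS // subsetI subsetUr.
lia.
Qed.

Lemma rank_setU_spanned (T X : {set V}) :
  (forall x, x \in X -> spanned x T) -> (rank (T :|: X) <= rank T)%N.
Proof.
rewrite -[X]set_enum; elim: (enum X) => [|x s IH] spX.
  by rewrite (_ : [set x in [::]] = set0) ?setU0 //; apply/setP => y; rewrite !inE.
have -> : T :|: [set y in x :: s] = x |: (T :|: [set y in s]).
  by apply/setP => y; rewrite !inE orbCA.
apply: leq_trans (IH _) => [|y]; last by rewrite !inE => ys; apply: spX; rewrite !inE ys orbT.
by apply: spannedS (subsetUl _ _) (spX x _); rewrite !inE eqxx.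
Qed.

Lemma spanned_trans (x : V) (T T' : {set V}) :
  (forall t, t \in T -> spanned t T') -> spanned x T -> spanned x T'.
Proof.
move=> spT spx; have spx' := spannedS (subsetUr T' T) spx.
have rkTT' := rank_setU_spanned spT.
have : (rank (x |: T') <= rank (x |: (T' :|: T)))%N by rewrite rankS // setUS ?subsetUl.
rewrite /spanned in spx' *; lia.
Qed.

Lemma spanned_dep (x : V) (Y T : {set V}) :
  Y \subset T -> M Y -> ~~ M (x |: Y) -> spanned x T.
Proof.
move=> sYT MY depY; apply: spannedS sYT _.
rewrite /spanned; apply: leq_trans (card_le_rank (subxx _) MY).
apply/bigmax_leqP => Z /andP[sZ MZ].
have [Y' [sYY' sY' MY' cardY']] := indep_augment MY MZ.
have xY' : x \notin Y'.
  by apply: contraNN depY => xY'; apply: indepS MY'; rewrite subUset sub1set xY'.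
apply: leq_trans cardY' (subset_leq_card _); apply/subsetP => z zY'.
move: (subsetP sY' z zY'); rewrite inE => /orP[// | /(subsetP sZ)].
by rewrite !inE => /orP[/eqP zx | //]; move: xY'; rewrite -zx zY'.
Qed.

End MatroidRank.

(* Extending [x |: heavy part] to a basis of [x |: X] drops a single element of [X],
   which would be lighter than [u] and yet repair [x |: X]. *)
Lemma dep_setU1_heavy (R : realFieldType) (V : finType) (M : pred {set V})
    (w : V -> R) (X : {set V}) (x u : V) (th : R) :
  is_matroid M -> M X -> x \notin X -> ~~ M (x |: X) -> u \in X ->
  (forall u', u' \in X -> M ((x |: X) :\ u') -> w u <= w u') -> th <= w u ->
  ~~ M (x |: [set y in X | th <= w y]).
Proof.
move=> matM MX xX depX uX u_min th_le; apply/negP => Mheavy.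
have [Y [sHY sY MY cardY]] := indep_augment matM Mheavy MX.
have sYX : Y \subset x |: X.
  apply: subset_trans sY _; rewrite !subUset subsetUl subsetUr andbT.
  by apply/subsetP => y /[!inE] /andP[-> _]; rewrite orbT.
have [u' u'xX u'Y] : exists2 u', u' \in x |: X & u' \notin Y.
  apply/subsetPn; apply: contraNN depX => sXY.
  by rewrite (_ : x |: X = Y) //; apply/eqP; rewrite eqEsubset sYX sXY.
have u'X : u' \in X.
  move: u'xX; rewrite !inE => /orP[/eqP u'x | //].
  by move: u'Y; rewrite (subsetP sHY) // u'x !inE eqxx.
have MXu' : M ((x |: X) :\ u').
  have cardD : #|(x |: X) :\ u'| = #|X|.
    by have := cardsD1 u' (x |: X); rewrite u'xX cardsU1 xX => -[].
  suff -> : (x |: X) :\ u' = Y by [].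
  apply/eqP; rewrite eq_sym eqEcard cardD cardY andbT.
  by rewrite subsetD1 sYX u'Y.
have u'_light : w u' < th.
  rewrite ltNge; apply: contraNN u'Y => th_le'.
  by apply: (subsetP sHY); rewrite !inE u'X th_le' orbT.
by have := le_lt_trans (le_trans th_le (u_min u' u'X MXu')) u'_light; rewrite ltxx.
Qed.

Section WeightSums.
Variables (R : realFieldType) (V : finType).
Implicit Types (w : V -> R) (A B : {set V}).

Lemma eq_wsum w1 w2 A : {in A, w1 =1 w2} -> wsum w1 A = wsum w2 A.
Proof. exact: eq_bigr. Qed.

Lemma wsumU1 w x A : x \notin A -> wsum w (x |: A) = w x + wsum w A.
Proof. exact: big_setU1. Qed.

Lemma wsumD1 w x A : x \in A -> wsum w A = w x + wsum w (A :\ x).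
Proof. exact: big_setD1. Qed.

Lemma wsum_setD w A B : B \subset A -> wsum w A = wsum w B + wsum w (A :\: B).
Proof. by move=> sBA; rewrite /wsum (big_setID B) /= (setIidPr sBA). Qed.

Lemma wsum_ge0 w A : {in A, forall x, 0 <= w x} -> 0 <= wsum w A.
Proof. by move=> w_ge0; apply: sumr_ge0 => x /w_ge0. Qed.

End WeightSums.

Lemma ratio_bound (R : realFieldType) (q alpha W E : R) :
  0 < alpha -> 1 <= q -> 0 <= E -> alpha * E <= W ->
  W + E + (1 + alpha) * (q * W + (q - 1) * E)
    <= ((q * (alpha + 1) - 1) * (alpha + 1) / alpha + 1 + 1 / alpha) * W.
Proof.
move=> alpha_gt0 q_ge1 E_ge0 EW.
have -> : ((q * (alpha + 1) - 1) * (alpha + 1) / alpha + 1 + 1 / alpha) * W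
    = q * (alpha + 1) ^+ 2 * W / alpha by field; rewrite gt_eqF.
rewrite ler_pdivlMr //.
(* After scaling by [alpha], the coefficient of [E] is [alpha * (q * (1 + alpha) - alpha)]. *)
have : 0 <= (q * (1 + alpha) - alpha) * (W - alpha * E).
  by apply: mulr_ge0; nra.
nra.
Qed.

Section Certificate.
Variables (R : realFieldType) (V : finType) (f : {set V} -> R) (p : nat)
  (Ms : 'I_p -> pred {set V}) (alpha : R).
Hypotheses (matMs : forall j, is_matroid (Ms j)) (f_mono : monotone f)
  (f_submod : submodular f) (alpha_gt0 : 0 < alpha).

Definition heavy (X G : {set V}) (w : V -> R) (th : R) : {set V} :=
  [set y in X :|: G | th <= w y].

(* [X] is the current solution, [A] every item ever inserted into it and [Rej]
   every item refused so far.  [G j] collects the removed items [A :\: X] except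
   those removed to make room in [Ms j]; [cov j o] is the weight of the item that
   blocked the rejected item [o] in [Ms j] (and [0] if [o] fitted in [Ms j]). *)
Record certificate (X : {set V}) (w : V -> R) (A Rej : {set V})
    (G : 'I_p -> {set V}) (cov : 'I_p -> V -> R) : Prop := Certificate {
  cert_feasible : feasible Ms X;
  cert_solution_sub : X \subset A;
  cert_disjoint : {in A, forall x, x \notin Rej};
  cert_value : f A <= wsum w A;
  cert_removed : alpha * wsum w (A :\: X) <= wsum w X;
  cert_weight_ge0 : {in A, forall x, 0 <= w x};
  cert_G_sub : forall j, G j \subset A :\: X;
  cert_G_sum : \sum_j wsum w (G j) <= (p%:R - 1) * wsum w (A :\: X);
  cert_rejected_gain : {in Rej, forall o, mg f o A <= (1 + alpha) * \sum_j cov j o};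
  cert_charge_ge0 : forall j, {in Rej, forall o, 0 <= cov j o};
  cert_spanned_accepted : forall j th x, 0 < th -> x \in A -> th <= w x ->
    spanned (Ms j) x (heavy X (G j) w th);
  cert_spanned_rejected : forall j th o, 0 < th -> o \in Rej -> th <= cov j o ->
    spanned (Ms j) o (heavy X (G j) w th)
}.

Definition violated (X : {set V}) (v : V) : {set 'I_p} := [set j | ~~ Ms j (v |: X)].

Definition min_exchange (w : V -> R) (X : {set V}) (v : V) (u : 'I_p -> V) : Prop :=
  forall j, j \in violated X v -> [/\ u j \in X, Ms j ((v |: X) :\ u j) &
    forall u', u' \in X -> Ms j ((v |: X) :\ u') -> w (u j) <= w u'].

Let alpha1_gt0 : 0 < 1 + alpha. Proof. by rewrite addrC ltr_pwDl. Qed.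

Lemma mg_ge0 x B : 0 <= mg f x B.
Proof. by rewrite subr_ge0; apply/f_mono/subsetUr. Qed.

Lemma certificate0 : f set0 = 0 ->
  certificate set0 (fun _ => 0) set0 set0 (fun _ => set0) (fun _ _ => 0).
Proof.
move=> f0; split; rewrite ?set0D ?/wsum ?big_set0 ?big1_eq ?f0 ?mulr0 //.
- by move=> j; case: (matMs j).
- by move=> x; rewrite inE.
- by move=> o; rewrite inE.
- by move=> j o; rewrite inE.
- by move=> j th x _; rewrite inE.
- by move=> j th o _; rewrite inE.
Qed.

Section Reweight.
Variables (X : {set V}) (w w' : V -> R) (A Rej : {set V}) (G : 'I_p -> {set V})
  (cov : 'I_p -> V -> R).
Hypotheses (cert : certificate X w A Rej G cov) (eq_w : {in A, w' =1 w}).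

Let sub_A : {subset A :\: X <= A}.
Proof. by move=> y /setDP[]. Qed.

Let heavy_eq j th : heavy X (G j) w' th = heavy X (G j) w th.
Proof.
have eq_XG : {in X :|: G j, w' =1 w}.
  move=> y /setUP[yX | yG]; apply: eq_w; first exact: (subsetP (cert_solution_sub cert)).
  exact/sub_A/(subsetP (cert_G_sub cert j)).
apply/setP => y; rewrite !inE; case: (boolP ((y \in X) || (y \in G j))) => //= yXG.
by rewrite eq_XG // inE.
Qed.

Lemma certificate_reweight : certificate X w' A Rej G cov.
Proof.
case: cert => feasX sXA disj valA evict w_ge0 sG sumG gain cov_ge0 spA spR.
have eqA (B : {set V}) : B \subset A -> wsum w' B = wsum w B.
  by move=> sBA; apply: eq_wsum => y /(subsetP sBA) /eq_w.
have sDA : A :\: X \subset A by exact: subsetDl.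
split=> //; rewrite ?eqA //.
- by move=> x xA; rewrite eq_w // w_ge0.
- by rewrite (eq_bigr _ (fun j _ => eqA _ (subset_trans (sG j) sDA))).
- by move=> j th x th_gt0 xA; rewrite heavy_eq eq_w //; apply: spA.
- by move=> j th o th_gt0 oRej; rewrite heavy_eq; apply: spR.
Qed.

End Reweight.

Lemma certificate_reject X w A Rej G cov o (u : 'I_p -> V) (w0 : V -> R) :
  certificate X w A Rej G cov -> o \notin A -> o \notin Rej -> {in X, w0 =1 w} ->
  min_exchange w0 X o u -> mg f o X < (1 + alpha) * wsum w0 (u @: violated X o) ->
  certificate X w A (o |: Rej) G
    (fun j y => if y == o then (if j \in violated X o then w (u j) else 0) else cov j y).
Proof.
move=> cert oA oRej eq_w0 u_min gain_o.
case: (cert) => feasX sXA disj valA evict w_ge0 sG sumG gain cov_ge0 spA spR.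
have oX : o \notin X by apply: contraNN oA => /(subsetP sXA).
have uX j : j \in violated X o -> u j \in X by case/u_min.
have w_uj j : j \in violated X o -> w0 (u j) = w (u j) by move/uX/eq_w0.
split=> //.
- move=> x xA; rewrite in_setU1 negb_or disj // andbT.
  by apply: contraNneq oA => <-.
- move=> o'; rewrite in_setU1 => /predU1P[-> | o'Rej]; last first.
    by rewrite (negbTE (contraNneq _ oRej)) ?gain // => <-.
  rewrite eqxx; apply: le_trans (f_submod sXA oA) _; apply/ltW/(lt_le_trans gain_o).
  rewrite ler_pM2l // /wsum; apply: le_trans (ler_sum_imset _) _.
    by move=> j /[dup] /w_uj -> /uX /(subsetP sXA) /w_ge0.
  by rewrite big_mkcond; apply: ler_sum => j _; case: ifP => // /w_uj ->.
- move=> j o'; rewrite in_setU1 => /predU1P[-> | o'Rej]; last first.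
    by rewrite (negbTE (contraNneq _ oRej)) ?cov_ge0 // => <-.
  by rewrite eqxx; case: ifP => // /uX /(subsetP sXA) /w_ge0.
move=> j th o' th_gt0; rewrite in_setU1 => /predU1P[-> | o'Rej]; last first.
  by rewrite (negbTE (contraNneq _ oRej)) => [|<-] //; apply: spR.
rewrite eqxx; case: ifP => [jviol | _] th_le; last by move: th_le; rewrite leNgt th_gt0.
have [ujX Mj uj_min] := u_min j jviol.
have uj_min_w u' : u' \in X -> Ms j ((o |: X) :\ u') -> w (u j) <= w u'.
  by move=> u'X Mu'; rewrite -(eq_w0 _ ujX) -(eq_w0 _ u'X) uj_min.
apply: (@spanned_dep _ _ (matMs j) _ [set y in X | th <= w y]).
- by apply/subsetP => y; rewrite !inE => /andP[-> ->].
- apply: (@indepS _ _ (matMs j) _ _ _ (feasX j)).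
  by apply/subsetP => y; rewrite inE => /andP[].
apply: dep_setU1_heavy (matMs j) (feasX j) oX _ ujX uj_min_w th_le.
by move: jviol; rewrite inE.
Qed.

Section Accept.
Variables (X : {set V}) (w : V -> R) (A Rej : {set V}) (G : 'I_p -> {set V})
  (cov : 'I_p -> V -> R) (v : V) (u : 'I_p -> V) (w0 : V -> R).
Hypotheses (cert : certificate X w A Rej G cov) (vA : v \notin A) (vRej : v \notin Rej)
  (eq_w0 : {in X, w0 =1 w}) (u_min : min_exchange w0 X v u)
  (gain_v : (1 + alpha) * wsum w0 (u @: violated X v) <= mg f v X).

Let S := u @: violated X v.
Let w' := upd w v (mg f v X).
Let X' := (v |: X) :\: S.
Let G' j := if j \in violated X v then G j :|: (S :\ u j) else G j :|: S.

Let sXA := cert_solution_sub cert.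
Let w_ge0 := cert_weight_ge0 cert.
Let vX : v \notin X. Proof. by apply: contraNN vA => /(subsetP sXA). Qed.
Let uS j : j \in violated X v -> u j \in S. Proof. by move=> jv; apply: imset_f. Qed.
Let sSX : S \subset X. Proof. by apply/subsetP => _ /imsetP[j /u_min[] ? _ _ ->]. Qed.
Let vS : v \notin S. Proof. by apply: contraNN vX => /(subsetP sSX). Qed.
Let vX' : v \in X'. Proof. by rewrite !inE eqxx vS. Qed.
Let sSA : S \subset A. Proof. exact: subset_trans sSX sXA. Qed.
Let wS_ge0 : 0 <= wsum w S. Proof. by apply: wsum_ge0 => y /(subsetP sSA) /w_ge0. Qed.
Let w'v : w' v = mg f v X. Proof. by rewrite /w' /upd eqxx. Qed.
Let w'A : {in A, w' =1 w}.
Proof. by move=> y yA; rewrite /w' /upd; case: eqP => // yv; move: vA; rewrite -yv yA. Qed.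

Let gain_w : (1 + alpha) * wsum w S <= mg f v X.
Proof. by rewrite -(@eq_wsum _ _ w0) // => y /(subsetP sSX) /eq_w0. Qed.

Let removed_eq : (v |: A) :\: X' = (A :\: X) :|: S.
Proof.
apply/setP => y; rewrite !inE; case: (eqVneq y v) => [-> | yv] /=.
  by rewrite (negbTE vA) (negbTE vS) (negbTE vX).
case: (boolP (y \in S)) => [yS | _] /=; last by rewrite orbF andbC.
by rewrite (subsetP sSA) ?orbT.
Qed.

Let wsum_removed : wsum w ((A :\: X) :|: S) = wsum w (A :\: X) + wsum w S.
Proof.
rewrite (wsum_setD w (subsetUr (A :\: X) S)) addrC; congr (_ + _); congr wsum.
apply/setP => y; rewrite !inE; case: (boolP (y \in S)) => [yS | _] /=; last by rewrite orbF.
by rewrite (subsetP sSX).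
Qed.

Let wsum_X' : wsum w' X' = mg f v X + wsum w X - wsum w S.
Proof.
have -> : X' = v |: (X :\: S).
  by apply/setP => y; rewrite !inE; case: (eqVneq y v) => [-> | _] //=; rewrite (negbTE vS).
rewrite wsumU1 ?inE ?(negbTE vX) ?andbF // w'v (wsum_setD w sSX).
rewrite (@eq_wsum _ _ w' w) => [|y /setDP[/(subsetP sXA) /w'A //]]; ring.
Qed.

Let sG'_removed j : G' j \subset (A :\: X) :|: S.
Proof.
rewrite /G'; case: ifP => _; rewrite subUset (subset_trans (cert_G_sub cert j)) ?subsetUl //.
  exact: subset_trans (subsetDl _ _) (subsetUr _ _).
exact: subsetUr.
Qed.

Let removed_sub_A : (A :\: X) :|: S \subset A.
Proof. by rewrite subUset subsetDl sSA. Qed.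

Let accept_feasible : feasible Ms X'.
Proof.
move=> j; case: (boolP (j \in violated X v)) => jv.
  have [ujX Mj _] := u_min jv; apply: (@indepS _ _ (matMs j) _ _ _ Mj).
  by apply: setDS; rewrite sub1set uS.
by apply: (@indepS _ _ (matMs j) _ _ (subsetDl _ _)); move: jv; rewrite inE negbK.
Qed.

Let accept_removed : alpha * wsum w' ((v |: A) :\: X') <= wsum w' X'.
Proof.
rewrite removed_eq (@eq_wsum _ _ w' w) => [|y /(subsetP removed_sub_A) /w'A //].
rewrite wsum_removed wsum_X'; have := cert_removed cert; have := gain_w; lra.
Qed.

Let accept_G_sum :
  \sum_j wsum w' (G' j) <= (p%:R - 1) * wsum w' ((v |: A) :\: X').
Proof.
have eqw' (B : {set V}) : B \subset (A :\: X) :|: S -> wsum w' B = wsum w B.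
  by move=> sB; apply: eq_wsum => y /(subsetP sB) /(subsetP removed_sub_A) /w'A.
rewrite removed_eq eqw' // wsum_removed.
have G'_le j : wsum w (G' j)
    <= wsum w (G j) + (wsum w S - (if j \in violated X v then w (u j) else 0)).
  have S_ge0 : {in S, forall y, 0 <= w y} by move=> y /(subsetP sSA) /w_ge0.
  rewrite /G'; case: ifP => jv; last by rewrite subr0; apply: ler_sum_setU.
  have SD_ge0 : {in S :\ u j, forall y, 0 <= w y} by move=> y /setD1P[_ /S_ge0].
  apply: le_trans (ler_sum_setU (G j) SD_ge0) _.
  by rewrite (wsumD1 w (uS jv)) /wsum; lra.
have S_le : wsum w S <= \sum_j (if j \in violated X v then w (u j) else 0).
  rewrite -big_mkcond /=; apply: ler_sum_imset => j /uS.
  by move=> /(subsetP sSA) /w_ge0.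
have := @ler_sum _ _ (index_enum 'I_p) predT _ _ (fun j _ => G'_le j).
rewrite (eq_bigr _ (fun j _ => eqw' _ (sG'_removed j))) big_split /= sumrB sumr_const card_ord.
have := cert_G_sum cert; rewrite -mulr_natl; lra.
Qed.

(* The removed item [u j] stays spanned: with [v] and the items of [X] at least as
   heavy as it, it forms a dependent set. *)
Let removed_spanned j th : j \in violated X v -> th <= w (u j) ->
  spanned (Ms j) (u j) (heavy X' (G' j) w' th).
Proof.
move=> jv th_le; have [ujX Mj uj_min] := u_min jv.
have uj_min_w u' : u' \in X -> Ms j ((v |: X) :\ u') -> w (u j) <= w u'.
  by move=> u'X Mu'; move: (uj_min u' u'X Mu'); rewrite !eq_w0.
set Xu := [set y in X | w (u j) <= w y].
apply: (@spanned_dep _ _ (matMs j) _ ((v |: Xu) :\ u j)).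
- apply/subsetP => y /setD1P[yuj]; rewrite !inE => /predU1P[-> | /andP[yX uj_le]].
    rewrite vS eqxx w'v /=; apply: le_trans th_le (le_trans _ gain_w).
    have : w (u j) <= wsum w S.
      by rewrite (wsumD1 w (uS jv)) lerDl wsum_ge0 // => z /setD1P[_ /(subsetP sSA) /w_ge0].
    have := mulr_ge0 (ltW alpha_gt0) wS_ge0; lra.
  rewrite w'A ?(subsetP sXA) // (le_trans th_le uj_le) andbT /G' jv !inE yuj yX.
  by case: (y \in S); rewrite ?orbT.
- apply: (@indepS _ _ (matMs j) _ _ _ Mj).
  by apply/setSD/setUS/subsetP => y; rewrite inE => /andP[].
have -> : u j |: ((v |: Xu) :\ u j) = v |: Xu.
  by rewrite setD1K // !inE ujX lexx orbT.
apply: dep_setU1_heavy (matMs j) (cert_feasible cert j) vX _ ujX uj_min_w (lexx _).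
by move: jv; rewrite inE.
Qed.

Let heavy_spanned j th t : t \in heavy X (G j) w th ->
  spanned (Ms j) t (heavy X' (G' j) w' th).
Proof.
rewrite inE => /andP[tXG th_le].
have tA : t \in A.
  case/setUP: tXG => [/(subsetP sXA) // | /(subsetP (cert_G_sub cert j))].
  by case/setDP.
case: (boolP ((j \in violated X v) && (t == u j))) => [/andP[jv /eqP tuj] | not_removed].
  by rewrite tuj in th_le *; apply: removed_spanned.
apply: spanned_mem; rewrite inE w'A // th_le andbT /G'.
case/setUP: tXG => [tX | tG]; last by case: ifP => _; rewrite !inE tG !orbT.
case: (boolP (t \in S)) => tS; last by rewrite !inE tS tX orbT.
case: ifP => jv; rewrite !inE tS ?orbT //.
by move: not_removed; rewrite jv /= => ->; rewrite !orbT.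
Qed.

Lemma certificate_accept : certificate X' w' (v |: A) Rej G' cov.
Proof.
case: (cert) => feasX _ disj valA _ _ _ _ gain cov_ge0 spA spR.
split.
- exact: accept_feasible.
- apply/subsetP => y; rewrite !inE => /andP[_ /predU1P[-> | /(subsetP sXA) ->]].
    by rewrite eqxx.
  by rewrite orbT.
- by move=> x /setU1P[-> | /disj //]; apply: contraNN vRej.
- rewrite wsumU1 // w'v (@eq_wsum _ _ w' w) => [|y /w'A //].
  have := f_submod sXA vA; rewrite /mg; lra.
- exact: accept_removed.
- by move=> x /setU1P[-> | xA]; rewrite ?w'v ?mg_ge0 // w'A // w_ge0.
- by move=> j; rewrite removed_eq.
- exact: accept_G_sum.
- move=> o oRej; apply: le_trans (gain _ oRej).
  have oA : o \notin A by apply: contraL oRej; apply: disj.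
  apply: f_submod (subsetUr _ _) _; rewrite in_setU1 negb_or oA andbT.
  by apply: contraNneq vRej => <-.
- exact: cov_ge0.
- move=> j th x th_gt0 /setU1P[-> | xA] th_le.
    by apply: spanned_mem; rewrite /heavy in_set in_setU vX' th_le.
  apply: (spanned_trans (matMs j) _ (spA j th x th_gt0 xA _)) => [t|]; first exact: heavy_spanned.
  by rewrite -w'A.
- move=> j th o th_gt0 oRej th_le.
  apply: (spanned_trans (matMs j) _ (spR j th o th_gt0 oRej th_le)) => t.
  exact: heavy_spanned.
Qed.

End Accept.

Lemma f_setU_le (A B : {set V}) : f (A :|: B) <= f A + \sum_(z in B) mg f z A.
Proof.
rewrite -big_enum -{1}(set_enum B) /=; elim: (enum B) => [|z s IH].
  by rewrite big_nil addr0 (_ : [set x in [::]] = set0) ?setU0 //; apply/setP => x; rewrite !inE.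
rewrite big_cons (_ : A :|: _ = z |: (A :|: [set x in s])); last first.
  by apply/setP => x; rewrite !inE orbCA.
have mg_le : mg f z (A :|: [set x in s]) <= mg f z A.
  case: (boolP (z \in A :|: [set x in s])) => zAs; last exact: f_submod (subsetUl _ _) zAs.
  by rewrite /mg (setUidPr _) ?sub1set // subrr mg_ge0.
move: IH mg_le; rewrite /mg; lra.
Qed.

Lemma charge_sum_le X w A Rej G cov (P : {set V}) j :
  certificate X w A Rej G cov -> P \subset Rej -> Ms j P ->
  \sum_(o in P) cov j o <= wsum w X + wsum w (G j).
Proof.
move=> cert sPRej MP.
have w_ge0 : {in X :|: G j, forall y, 0 <= w y}.
  move=> y /setUP[/(subsetP (cert_solution_sub cert)) | /(subsetP (cert_G_sub cert j)) /setDP[+ _]];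
  exact: (cert_weight_ge0 cert).
apply: le_trans (ler_sum_setU _ (fun y yG => w_ge0 y _)) => [|y yG]; last by rewrite inE yG orbT.
apply: ler_sum_superlevel => [o /(subsetP sPRej) /(cert_charge_ge0 cert) // | // | t t_gt0].
set Pt := [set o in P | _].
have MPt : Ms j Pt.
  by apply: (@indepS _ _ (matMs j) _ _ _ MP); apply/subsetP => o; rewrite inE => /andP[].
have Pt_spanned : (rank (Ms j) (heavy X (G j) w t :|: Pt) <= rank (Ms j) (heavy X (G j) w t))%N.
  apply: (@rank_setU_spanned _ _ (matMs j)) => o; rewrite inE => /andP[oP t_le].
  exact: (cert_spanned_rejected cert t_gt0 (subsetP sPRej o oP) t_le).
apply: leq_trans (card_le_rank (subsetUr _ Pt) MPt) (leq_trans Pt_spanned _).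
exact: rank_le_card.
Qed.

Lemma certificate_bound X w A Rej G cov (O : {set V}) :
  certificate X w A Rej G cov -> (0 < p)%N ->
  O \subset A :|: Rej -> feasible Ms O ->
  f O <= ((p%:R * (alpha + 1) - 1) * (alpha + 1) / alpha + 1 + 1 / alpha) * wsum w X.
Proof.
move=> cert p_gt0 sOARej feasO; set P := O :\: A.
have sPRej : P \subset Rej.
  by apply/subsetP => o /setDP[/(subsetP sOARej) /setUP[] // oA /negP].
have fO_le : f O <= f A + \sum_(o in P) mg f o A.
  apply: le_trans (f_setU_le A P); apply: f_mono.
  by apply/subsetP => o oO; rewrite !inE oO andbT orbN.
have gain_le : \sum_(o in P) mg f o A <= (1 + alpha) * \sum_j \sum_(o in P) cov j o.
  rewrite (exchange_big _ _ (index_enum _)) /= mulr_sumr; apply: ler_sum => o oP.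
  exact: (cert_rejected_gain cert (subsetP sPRej o oP)).
have charges_le : \sum_j \sum_(o in P) cov j o
    <= p%:R * wsum w X + (p%:R - 1) * wsum w (A :\: X).
  have charge_le j : \sum_(o in P) cov j o <= wsum w X + wsum w (G j).
    exact: charge_sum_le cert sPRej (@indepS _ _ (matMs j) _ _ (subsetDl _ _) (feasO j)).
  apply: le_trans (ler_sum _ (fun j _ => charge_le j)) _.
  rewrite big_split /= sumr_const card_ord -[wsum w X *+ p]mulr_natl lerD2l.
  exact: (cert_G_sum cert).
have fA_le : f A <= wsum w X + wsum w (A :\: X).
  by rewrite -wsum_setD ?(cert_value cert) ?(cert_solution_sub cert).
have p_ge1 : 1 <= p%:R :> R by rewrite ler1n.
have E_ge0 : 0 <= wsum w (A :\: X).
  by apply: wsum_ge0 => y /setDP[/(cert_weight_ge0 cert)].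
apply: le_trans (ratio_bound alpha_gt0 p_ge1 E_ge0 (cert_removed cert)).
have := alpha_gt0; nra.
Qed.

End Certificate.

Section Streaming.
Variables (R : realFieldType) (V : finType) (f : {set V} -> R) (p : nat)
  (Ms : 'I_p -> pred {set V}) (d : nat) (eps alpha : R)
  (Ex : {set V} -> V -> (V -> R) -> {set V}).
Hypotheses (matMs : forall j, is_matroid (Ms j)) (f_mono : monotone f)
  (f_submod : submodular f) (alpha_gt0 : 0 < alpha) (Ex_spec : exch_spec Ms Ex).

Definition certified (X : {set V}) (w : V -> R) (A Rej : {set V}) : Prop :=
  exists G cov, certificate f Ms alpha X w A Rej G cov.

Lemma Ex_min_exchange X v (w0 : V -> R) : feasible Ms X ->
  exists u, min_exchange Ms w0 X v u /\ Ex X v w0 = u @: violated Ms X v.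
Proof.
move=> feasX; have [u [u_min ->]] := Ex_spec v w0 feasX.
by exists u; split=> // j; rewrite inE; apply: u_min.
Qed.

Lemma certified_reject X w A Rej o (w0 : V -> R) :
  certified X w A Rej -> o \notin A :|: Rej -> {in X, w0 =1 w} ->
  mg f o X < (1 + alpha) * wsum w0 (Ex X o w0) -> certified X w A (o |: Rej).
Proof.
move=> [G [cov cert]]; rewrite in_setU negb_or => /andP[oA oRej] eq_w0.
have [u [u_min ->]] := Ex_min_exchange o w0 (cert_feasible cert).
move=> gain_o; do 2!eexists.
exact: (certificate_reject matMs f_submod alpha_gt0 cert oA oRej eq_w0 u_min gain_o).
Qed.

Lemma certified_accept X w A Rej v (w0 : V -> R) :
  certified X w A Rej -> v \notin A :|: Rej -> {in X, w0 =1 w} ->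
  (1 + alpha) * wsum w0 (Ex X v w0) <= mg f v X ->
  certified ((v |: X) :\: Ex X v w0) (upd w v (mg f v X)) (v |: A) Rej.
Proof.
move=> [G [cov cert]]; rewrite in_setU negb_or => /andP[vA vRej] eq_w0.
have [u [u_min ->]] := Ex_min_exchange v w0 (cert_feasible cert).
move=> gain_v; do 2!eexists.
exact: (certificate_accept matMs f_mono f_submod alpha_gt0 cert vA vRej eq_w0 u_min gain_v).
Qed.

Lemma certified_reject_set X w A Rej (Z : {set V}) :
  certified X w A Rej -> {in Z, forall o, o \notin A :|: Rej} ->
  {in Z, forall o, mg f o X < (1 + alpha) * wsum w (Ex X o w)} ->
  certified X w A (Rej :|: Z).
Proof.
rewrite -(set_enum Z); elim: (enum Z) (enum_uniq Z) Rej => [|o s IH] /= uniq_s Rej cert fresh gain.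
  by rewrite (_ : [set x in [::]] = set0) ?setU0 //; apply/setP => x; rewrite !inE.
case/andP: uniq_s => os uniq_s.
have oZ : o \in [set x in o :: s] by rewrite !inE eqxx.
have -> : Rej :|: [set x in o :: s] = (o |: Rej) :|: [set x in s].
  by apply/setP => x; rewrite !inE; case: (x == o); case: (x \in Rej).
apply: (IH uniq_s (o |: Rej)).
- exact: certified_reject cert (fresh o oZ) (fun _ _ => erefl) (gain o oZ).
- move=> z; rewrite inE => zs.
  have : z \notin A :|: Rej by apply: fresh; rewrite !inE zs orbT.
  rewrite !in_setU in_set1 !negb_or => /andP[-> ->]; rewrite andbT.
  by apply: contraNneq os => <-.
- by move=> z; rewrite inE => zs; apply: gain; rewrite !inE zs orbT.
Qed.

Lemma stepA_certified (x : V) (X C : {set V}) (w : V -> R) (X' C' : {set V}) (w' : V -> R)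
    (A Rej : {set V}) :
  certified X w A Rej -> {in C, forall y, y \notin A :|: Rej} ->
  x \notin C :|: A :|: Rej -> stepA f Ex d eps alpha x (X, C, w) (X', C', w') ->
  exists A' Rej', [/\ certified X' w' A' Rej', {in C', forall y, y \notin A' :|: Rej'} &
    C' :|: A' :|: Rej' = x |: (C :|: A :|: Rej)].
Proof.
move=> cert freshC freshx; rewrite /stepA.
set C2 := [set v in x |: C | _]; set Z := (x |: C) :\: C2.
have fresh : {in x |: C, forall y, y \notin A :|: Rej}.
  move=> y /setU1P[-> | /freshC //]; apply: contraNN freshx; rewrite !inE.
  by case/orP=> ->; rewrite !orbT.
have sC2 : C2 \subset x |: C by apply/subsetP => y; rewrite inE => /andP[].
have certZ : certified X w A (Rej :|: Z).
  apply: certified_reject_set cert _ _ => [o /setDP[/fresh] // | o /setDP[oxC]].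
  by rewrite !inE -in_setU1 oxC ltNge.
have C2Z : C2 :|: Z = x |: C by rewrite -[RHS](setID (x |: C) C2) (setIidPr sC2).
have freshC2 : {in C2, forall y, y \notin A :|: (Rej :|: Z)}.
  move=> y yC2; rewrite setUA !in_setU negb_or -in_setU fresh ?(subsetP sC2) //.
  by rewrite /Z in_setD yC2.
have seen : C2 :|: A :|: (Rej :|: Z) = x |: (C :|: A :|: Rej).
  clearbody C2 Z; apply/setP => y; move/setP/(_ y): C2Z; rewrite !inE.
  by case: (y \in C2); case: (y \in Z); case: (y == x); case: (y \in C);
    case: (y \in A); case: (y \in Rej).
case: ifP => _ => [[-> -> ->] | [v vC2 [-> -> ->]]].
  by exists A, (Rej :|: Z).
have /freshC2 := vC2; rewrite in_setU negb_or => /andP[vA vRejZ].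
exists (v |: A), (Rej :|: Z); split.
- apply: certified_accept certZ _ (fun _ _ => erefl) _; first by rewrite in_setU negb_or vA.
  by move: vC2; rewrite inE => /andP[].
- move=> y /setD1P[yv yC2]; apply: contraNN (freshC2 y yC2).
  by rewrite !in_setU in_set1 (negbTE yv).
- by rewrite -seen; congr (_ :|: _); rewrite setUCA setUA setD1K.
Qed.

Lemma runA_certified (s : seq V) (X C : {set V}) (w : V -> R) (X' C' : {set V})
    (w' : V -> R) (A Rej : {set V}) :
  runA f Ex d eps alpha s (X, C, w) (X', C', w') ->
  certified X w A Rej -> {in C, forall y, y \notin A :|: Rej} ->
  uniq s -> {in s, forall z, z \notin C :|: A :|: Rej} ->
  exists A' Rej', [/\ certified X' w' A' Rej', {in C', forall y, y \notin A' :|: Rej'} &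
    C' :|: A' :|: Rej' = [set z in s] :|: (C :|: A :|: Rej)].
Proof.
elim: s X C w A Rej => [|x s IH] X C w A Rej /=.
  case=> -> -> -> cert freshC _ _; exists A, Rej; split=> //.
  by apply/setP => y; rewrite !inE.
case=> [[[X1 C1] w1] step run] cert freshC /andP[xs uniq_s] fresh.
have [A1 [Rej1 [cert1 freshC1 seen1]]] := stepA_certified cert freshC (fresh x (mem_head _ _)) step.
have [|A2 [Rej2 [cert2 freshC2 seen2]]] := IH _ _ _ _ _ run cert1 freshC1 uniq_s.
  move=> z zs; rewrite seen1 in_setU1 negb_or fresh ?inE ?zs ?orbT // andbT.
  by apply: contraNneq xs => <-.
exists A2, Rej2; split=> //; rewrite seen2 seen1.
by apply/setP => y; rewrite !inE; case: (y == x); case: (y \in s).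
Qed.

Lemma stepB_certified (v : V) (X : {set V}) (w : V -> R) (X' : {set V}) (w' : V -> R)
    (A Rej : {set V}) :
  certified X w A Rej -> v \notin A :|: Rej -> stepB f Ex alpha v (X, w) (X', w') ->
  exists A' Rej', certified X' w' A' Rej' /\ A' :|: Rej' = v |: (A :|: Rej).
Proof.
move=> cert fresh; rewrite /stepB.
have [vA vRej] : v \notin A /\ v \notin Rej by move: fresh; rewrite in_setU negb_or => /andP.
have vX : v \notin X.
  by have [G [cov certGc]] := cert; apply: contraNN vA => /(subsetP (cert_solution_sub certGc)).
set wv := upd w v (mg f v X).
have wv_v : wv v = mg f v X by rewrite /wv /upd eqxx.
have eq_wv (B : {set V}) : v \notin B -> {in B, wv =1 w}.
  by move=> vB y yB; rewrite /wv /upd; case: eqP => // yv; move: vB; rewrite -yv yB.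
case: ifP => gain [-> ->].
  exists (v |: A), Rej; split; last by rewrite setUA.
  by apply: certified_accept cert fresh (eq_wv _ vX) _; rewrite -wv_v.
exists A, (v |: Rej); split; last by rewrite setUCA.
have gain_lt : mg f v X < (1 + alpha) * wsum wv (Ex X v wv) by rewrite ltNge -wv_v gain.
have [G [cov certv]] := certified_reject cert fresh (eq_wv _ vX) gain_lt.
by exists G, cov; apply: certificate_reweight certv (eq_wv _ vA).
Qed.

Lemma runB_certified (s : seq V) (X : {set V}) (w : V -> R) (X' : {set V}) (w' : V -> R)
    (A Rej : {set V}) :
  runB f Ex alpha s (X, w) (X', w') -> certified X w A Rej ->
  uniq s -> {in s, forall z, z \notin A :|: Rej} ->
  exists A' Rej', certified X' w' A' Rej' /\ A' :|: Rej' = [set z in s] :|: (A :|: Rej).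
Proof.
elim: s X w A Rej => [|x s IH] X w A Rej /=.
  case=> -> -> cert _ _; exists A, Rej; split=> //.
  by apply/setP => y; rewrite !inE.
case=> [[X1 w1] step run] cert /andP[xs uniq_s] fresh.
have [A1 [Rej1 [cert1 seen1]]] := stepB_certified cert (fresh x (mem_head _ _)) step.
have [|A2 [Rej2 [cert2 seen2]]] := IH _ _ _ _ run cert1 uniq_s.
  move=> z zs; rewrite seen1 in_setU1 negb_or fresh ?inE ?zs ?orbT // andbT.
  by apply: contraNneq xs => <-.
exists A2, Rej2; split=> //; rewrite seen2 seen1.
by apply/setP => y; rewrite !inE; case: (y == x); case: (y \in s).
Qed.

End Streaming.

Theorem corollary1 (R : realFieldType) (V : finType) (f : {set V} -> R)
    (p : nat) (Ms : 'I_p -> pred {set V}) (d : nat) (D : {set V})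
    (eps alpha : R) (Ex : {set V} -> V -> (V -> R) -> {set V})
    (s : seq V) (S1 C : {set V}) (wA : V -> R)
    (sB : seq V) (S2 : {set V}) (wB : V -> R) (O : {set V}) :
  (0 < p)%N ->
  (forall j, is_matroid (Ms j)) ->
  f set0 = 0 -> (forall S : {set V}, 0 <= f S) -> monotone f -> submodular f ->
  (#|D| <= d)%N -> 0 < eps -> 0 < alpha ->
  exch_spec Ms Ex ->
  uniq s -> (forall x, x \in s) ->
  runA f Ex d eps alpha s (set0, set0, fun _ => 0) (S1, C, wA) ->
  uniq sB -> (forall x, (x \in sB) = (x \in C :\: D)) ->
  runB f Ex alpha sB (S1, wA) (S2, wB) ->
  O \subset (~: C) :|: (C :\: D) -> feasible Ms O ->
  (forall S : {set V}, S \subset (~: C) :|: (C :\: D) -> feasible Ms S -> f S <= f O) ->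
  f O <= ((p%:R * (alpha + 1) - 1) * (alpha + 1) / alpha + 1 + 1 / alpha)
           * wsum wB S2.
Proof.
move=> p_gt0 matMs f0 _ f_mono f_submod _ _ alpha_gt0 Ex_spec uniq_s all_s runA_s
  uniq_sB sB_CD runB_sB sO feasO _.
have cert0 : certified f Ms alpha set0 (fun _ => 0) set0 set0.
  by do 2!eexists; apply: certificate0.
have fresh0 : {in set0, forall y : V, y \notin set0 :|: set0} by move=> y; rewrite inE.
have fresh_s : {in s, forall z, z \notin set0 :|: set0 :|: set0} by move=> z; rewrite !inE.
have [A1 [Rej1 [cert1 freshC seen1]]] :=
  runA_certified matMs f_mono f_submod alpha_gt0 Ex_spec runA_s cert0 fresh0 uniq_s fresh_s.
have [|A2 [Rej2 [[G [cov cert2]] seen2]]] :=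
  runB_certified matMs f_mono f_submod alpha_gt0 Ex_spec runB_sB cert1 uniq_sB.
  by move=> z; rewrite sB_CD => /setDP[/freshC].
apply: (certificate_bound matMs f_mono f_submod alpha_gt0 cert2 p_gt0 _ feasO).
rewrite seen2; apply/subsetP => o /(subsetP sO) oO; rewrite in_setU inE sB_CD.
case: (boolP (o \in C)) => oC; first by move: oO; rewrite !inE oC /= !andbT => ->.
have : o \in C :|: A1 :|: Rej1 by rewrite seen1 !inE all_s.
by rewrite -setUA in_setU (negbTE oC) /= => ->; rewrite orbT.
Qed.
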